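(* Let $P$ be a finite poset with $n$ elements and $\theta:P\to[n]$ a bijection. Then $$\hat K_{P,\theta}=\sum_{N\ge n}\ \sum_{w\in\tilde{\mathcal J}_N(P,\theta)}\hat L_{\mathcal C(w)}.$$
   Context: A $(P,\theta)$-multiset-valued partition is a map $\sigma$ from $P$ to nonempty finite multisets of positive integers such that for every covering relation $s\lessdot t$ in $P$: $\max\sigma(s)\le\min\sigma(t)$ if $\theta(s)<\theta(t)$, and $\max\sigma(s)<\min\sigma(t)$ if $\theta(s)>\theta(t)$. $\hat K_{P,\theta}=\sum_\sigma\prod_{r\ge1}x_r^{m_r(\sigma)}$, summed over all such $\sigma$, where $m_r(\sigma)$ is the total multiplicity of $r$ in all the multisets $\sigma(p)$, $p\in P$. A linear multi-extension of $P$ by $[N]$ ($N\ge n$) is a map $e$ from $P$ to nonempty subsets of $[N]$ such that $\max e(x)<\min e(y)$ whenever $x<y$ in $P$, each $i\in[N]$ lies in $e(x)$ for exactly one $x\in P$ (denoted $e^{-1}(i)$), and no $e(x)$ contains both $i$ and $i+1$. $\tilde{\mathcal J}_N(P,\theta)$ is the set of words $\theta(e^{-1}(1))\theta(e^{-1}(2))\cdots\theta(e^{-1}(N))$ over all linear multi-extensions $e$ of $P$ by $[N]$. For a word $w=w_1\cdots w_N$ with no two consecutive letters equal, $\mathcal C(w)=(s_1,s_2-s_1,\dots,N-s_k)$ where $\{s_1<\dots<s_k\}=\{i:w_i>w_{i+1}\}$. For a composition $\alpha=(\alpha_1,\dots,\alpha_k)$ of $m$ with $S_\alpha=\{\alpha_1,\alpha_1+\alpha_2,\dots,\alpha_1+\dots+\alpha_{k-1}\}$,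 $\hat L_\alpha=\sum x^\sigma$ over all sequences $(\sigma_1,\dots,\sigma_m)$ of nonempty finite multisets of positive integers with $\max\sigma_j\le\min\sigma_{j+1}$ for all $j$ and strict inequality when $j\in S_\alpha$, with $x^\sigma$ the monomial counting multiplicities. *)

From mathcomp Require Import all_boot all_order.
Set Implicit Arguments. Unset Strict Implicit. Unset Printing Implicit Defensive.
Import Order.Theory.
Local Open Scope order_scope.

Definition card_eq (T : eqType) (A : T -> Prop) (c : nat) : Prop :=
  exists f : 'I_c -> T, injective f /\ (forall x, A x <-> exists i, f i = x).

(* A finite multiset of positive integers is represented canonically by the
   nondecreasing list of its elements.  min = head, max = last,
   multiplicity of r = count_mem r. *)
Definition posmset (s : seq nat) : bool := sorted leq s && all (leq 1) s.
Definition nemset (s : seq nat) : bool := posmset s && (s != [::]).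
Definition mmin (s : seq nat) : nat := head 0%N s.
Definition mmax (s : seq nat) : nat := last 0%N s.

Definition covers (d : Order.disp_t) (P : finPOrderType d) (s t : P) : bool :=
  (s < t) && ~~ [exists u : P, (s < u) && (u < t)].

Definition PTpartition (d : Order.disp_t) (P : finPOrderType d)
    (theta : P -> nat) (sigma : {ffun P -> seq nat}) : Prop :=
  (forall p, nemset (sigma p)) /\
  (forall s t : P, covers s t ->
     (theta s < theta t)%N -> (mmax (sigma s) <= mmin (sigma t))%N) /\
  (forall s t : P, covers s t ->
     (theta s > theta t)%N -> (mmax (sigma s) < mmin (sigma t))%N).

(* Monomials x^m = prod_{r>=1} x_r^(m r); the value m 0 is irrelevant. *)
(* Set of (P,theta)-partitions sigma with x^sigma = x^m :
   its cardinality is the coefficient of x^m in \hat K_{P,theta}. *)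
Definition Kcoeffset (d : Order.disp_t) (P : finPOrderType d)
    (theta : P -> nat) (m : nat -> nat) (sigma : {ffun P -> seq nat}) : Prop :=
  PTpartition theta sigma /\
  (forall r, (0 < r)%N -> (\sum_(p : P) count_mem r (sigma p))%N = m r).

(* Word w = w_1 ... w_N is the list [:: w_1; ...; w_N]; w_i = nth 0 w (i-1). *)
Definition descents (w : seq nat) : seq nat :=
  [seq i <- iota 1 (size w).-1 | (nth 0 w i.-1 > nth 0 w i)%N].

(* C(w) = (s_1, s_2 - s_1, ..., N - s_k) *)
Definition compC (w : seq nat) : seq nat :=
  pairmap (fun a b => b - a)%N 0%N (rcons (descents w) (size w)).

Definition setS (alpha : seq nat) : seq nat :=
  [seq sumn (take i alpha) | i <- iota 1 (size alpha).-1].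

(* Sequences (sigma_1,...,sigma_M), M = |alpha|, of nonempty finite multisets
   of positive integers with max sigma_j <= min sigma_{j+1}, strict for
   j in S_alpha, and with x^sigma = x^m.  (sigma_j = nth [::] tau (j-1).)
   Its cardinality is the coefficient of x^m in \hat L_alpha. *)
Definition Lcoeffset (alpha : seq nat) (m : nat -> nat) (tau : seq (seq nat))
  : Prop :=
  size tau = sumn alpha /\
  (forall s, s \in tau -> nemset s) /\
  (forall j, (1 <= j)%N -> (j < sumn alpha)%N ->
     (mmax (nth [::] tau j.-1) <= mmin (nth [::] tau j))%N) /\
  (forall j, (1 <= j)%N -> (j < sumn alpha)%N -> j \in setS alpha ->
     (mmax (nth [::] tau j.-1) < mmin (nth [::] tau j))%N) /\
  (forall r, (0 < r)%N -> sumn [seq count_mem r s | s <- tau] = m r).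

(* e : P -> subsets of [N]; the element i : 'I_N stands for the integer i+1. *)
Definition linmultiext (d : Order.disp_t) (P : finPOrderType d) (N : nat)
    (e : {ffun P -> {set 'I_N}}) : Prop :=
  (forall x, e x != set0) /\
  (forall x y : P, x < y ->
     forall i j : 'I_N, i \in e x -> j \in e y -> (i < j)%N) /\
  (forall i : 'I_N, exists! x : P, i \in e x) /\
  (forall (x : P) (i j : 'I_N), val j = (val i).+1 ->
     ~~ ((i \in e x) && (j \in e x))).

Definition inJ (d : Order.disp_t) (P : finPOrderType d) (theta : P -> nat)
    (N : nat) (w : seq nat) : Prop :=
  size w = N /\
  exists e : {ffun P -> {set 'I_N}}, linmultiext e /\
    (forall (i : 'I_N) (x : P), i \in e x -> nth 0 w i = theta x).

(* Triples (N, w, tau) with N >= n, w \in \tilde J_N(P,theta) and tau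
   contributing x^m to \hat L_{C(w)}: its cardinality is the coefficient of
   x^m in  sum_{N>=n} sum_{w in \tilde J_N} \hat L_{C(w)}. *)
Definition Rcoeffset (d : Order.disp_t) (P : finPOrderType d)
    (theta : P -> nat) (m : nat -> nat)
    (t : nat * seq nat * seq (seq nat)) : Prop :=
  let: (N, w, tau) := t in
  (#|P| <= N)%N /\ inJ theta N w /\ Lcoeffset (compC w) m tau.

From mathcomp Require Import all_boot all_order zify.
From Stdlib Require Import ClassicalEpsilon.
Set Implicit Arguments. Unset Strict Implicit. Unset Printing Implicit Defensive.
Import Order.Theory.

(* Write the entries of a (P,theta)-partition sigma as pairs (v, theta p), v in
   sigma p, sort them lexicographically (value first, label second) and cut the
   list into maximal runs of equal label.  The labels of the runs form a word w
   of \tilde J_N(P,theta) and the runs form a sequence tau counted by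
   \hat L_{C(w)}: the inequalities between consecutive runs are strict exactly
   when the label decreases, i.e. at the descents of w.  Reading off the
   entries of label theta p from (w, tau) gives back sigma p, and this inverse
   map is injective because a sorted list of entries has a unique decomposition
   into maximal runs. *)

Lemma card_eq_cover (T : eqType) (A : T -> Prop) (s : seq T) :
  (forall x, A x -> x \in s) -> exists c, card_eq A c.
Proof.
move=> sA.
pose a x : bool := if excluded_middle_informative (A x) then true else false.
have aP x : a x <-> A x by rewrite /a; case: excluded_middle_informative.
case: s sA => [|x0 s0] sA.
  have f : 'I_0 -> T by case.
  by exists 0, f; split=> [[]//|x]; split=> [/sA|[[]]].
pose s := undup [seq x <- x0 :: s0 | a x].
exists (size s), (fun i => nth x0 s i); split.
  by move=> i j /eqP; rewrite nth_uniq ?undup_uniq ?ltn_ord // => /eqP/val_inj.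
move=> x; split=> [Ax|[i <-]].
  have xs : x \in s by rewrite mem_undup mem_filter (proj2 (aP x) Ax) sA.
  have xi : index x s < size s by rewrite index_mem.
  by exists (Ordinal xi); rewrite /= nth_index.
by have := mem_nth x0 (ltn_ord i); rewrite mem_undup mem_filter => /andP[/aP].
Qed.

Lemma card_eq_bij (T U : eqType) (A : T -> Prop) (B : U -> Prop) (F : U -> T) c :
  card_eq A c -> (forall u, B u -> A (F u)) ->
  (forall u v, B u -> B v -> F u = F v -> u = v) ->
  (forall x, A x -> exists u, B u /\ F u = x) -> card_eq B c.
Proof.
move=> [f [f_inj fA]] FA F_inj F_surj.
have pre i : exists u, B u /\ F u = f i by apply/F_surj/fA; exists i.
pose g i := proj1_sig (constructive_indefinite_description _ (pre i)).
have gP i : B (g i) /\ F (g i) = f i.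
  exact: proj2_sig (constructive_indefinite_description _ (pre i)).
exists g; split=> [i j gij|u].
  by apply: f_inj; rewrite -(proj2 (gP i)) -(proj2 (gP j)) gij.
split=> [Bu|[i <-]]; last exact: (proj1 (gP i)).
have [i fi] : exists i, f i = F u by apply/fA/FA.
by exists i; apply: F_inj (proj1 (gP i)) Bu _; rewrite (proj2 (gP i)).
Qed.

Lemma sorted_leq_last x s : sorted leq s -> x \in s -> x <= last 0 s.
Proof.
move=> so xs; have ix : index x s < size s by rewrite index_mem.
rewrite -nth_last -{1}(nth_index 0 xs).
by apply: (sorted_leq_nth leq_trans leqnn) => //; rewrite ?unfold_in /=; lia.
Qed.

Lemma sorted_head_leq x s : sorted leq s -> x \in s -> head 0 s <= x.
Proof.
move=> so xs; have ix : index x s < size s by rewrite index_mem.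
rewrite -nth0 -(nth_index 0 xs).
by apply: (sorted_leq_nth leq_trans leqnn) => //; rewrite ?unfold_in /=; lia.
Qed.

Lemma mem_head_nonnil (T : eqType) (x0 : T) s : s != [::] -> head x0 s \in s.
Proof. by case: s => // a s _; exact: mem_head. Qed.

Lemma mem_last_nonnil (T : eqType) (x0 : T) s : s != [::] -> last x0 s \in s.
Proof. by case: s => // a s _; exact: (mem_last a s). Qed.

Lemma nth_unzip1 (S T : Type) (x0 : S) (y0 : T) s i :
  nth x0 (unzip1 s) i = (nth (x0, y0) s i).1.
Proof.
case: (ltnP i (size s)) => iS; first by rewrite (nth_map (x0, y0)).
by rewrite !nth_default ?size_map.
Qed.

Lemma nth_unzip2 (S T : Type) (x0 : S) (y0 : T) s i :
  nth y0 (unzip2 s) i = (nth (x0, y0) s i).2.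
Proof.
case: (ltnP i (size s)) => iS; first by rewrite (nth_map (x0, y0)).
by rewrite !nth_default ?size_map.
Qed.

Section SortedFlatten.
Variables (T : eqType) (r : rel T).
Hypothesis r_trans : transitive r.

Lemma sorted_cat_rel s1 s2 u v :
  sorted r (s1 ++ s2) -> u \in s1 -> v \in s2 -> r u v.
Proof.
move=> + us1; case/splitPr: us1 => p1 p2.
rewrite -catA cat_cons sorted_cat_cons => /andP[_ /(order_path_min r_trans)/allP le_u] vs2.
by apply: le_u; rewrite mem_cat vs2 orbT.
Qed.

Lemma sorted_flatten_nth_rel bs i j u v :
  sorted r (flatten bs) -> i < j -> j < size bs ->
  u \in nth [::] bs i -> v \in nth [::] bs j -> r u v.
Proof.
move=> so ij js ui vj; move: so.
rewrite -(cat_take_drop j bs) flatten_cat => /sorted_cat_rel; apply.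
  apply/flattenP; exists (nth [::] bs i) => //.
  by rewrite -(nth_take [::] ij) mem_nth // size_take js.
by rewrite (drop_nth [::] js) /= mem_cat vj.
Qed.

Lemma sorted_flatten_mem bs b : sorted r (flatten bs) -> b \in bs -> sorted r b.
Proof.
elim: bs => [//|c bs IH] /= /cat_sorted2[sc sbs]; rewrite inE.
by case/orP => [/eqP->|]; [exact: sc | exact: IH].
Qed.

Lemma sorted_flatten x0 bs :
  all (fun b => b != [::]) bs -> all (sorted r) bs ->
  (forall j, j.+1 < size bs ->
     r (last x0 (nth [::] bs j)) (head x0 (nth [::] bs j.+1))) ->
  sorted r (flatten bs).
Proof.
elim: bs => [//|b bs IH] /= /andP[b_ne bs_ne] /andP[sb sbs] adj.
have sfl : sorted r (flatten bs) by apply: IH => // j js; apply: (adj j.+1).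
case: b b_ne sb adj => [//|a b] _ /= sb adj; rewrite cat_path sb /=.
case: bs bs_ne sfl adj {IH sbs} => [//|[|c0 c] bs] //= _ sfl adj.
by rewrite sfl andbT (adj 0).
Qed.

End SortedFlatten.

Definition gaps (x0 : nat) (s : seq nat) : seq nat := pairmap (fun a b => b - a) x0 s.

Lemma sumn_gaps x0 s : path leq x0 s -> sumn (gaps x0 s) = last x0 s - x0.
Proof.
elim: s x0 => [|y s IH] x0 /=; first by rewrite subnn.
move=> /andP[x0y ys]; rewrite IH //.
have := order_path_min leq_trans ys => /allP le_y.
have : y <= last y s by have := mem_last y s; rewrite inE => /orP[/eqP->//|/le_y].
lia.
Qed.

Lemma setS_cons a alpha : alpha != [::] ->
  setS (a :: alpha) = a :: map (addn a) (setS alpha).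
Proof.
case: alpha => [//|b alpha] _; rewrite /setS /= addn0; congr (_ :: _).
by rewrite -map_comp (_ : 2 = 1 + 1) // iotaDl -map_comp.
Qed.

Lemma setS_gaps x0 s N : path leq x0 (rcons s N) ->
  setS (gaps x0 (rcons s N)) = map (subn^~ x0) s.
Proof.
elim: s x0 => [//|y s IH] x0 /= /andP[x0y ys].
rewrite setS_cons; last by case: (s).
rewrite IH // -map_comp; congr (_ :: _); apply/eq_in_map => z zs /=.
have := order_path_min leq_trans ys => /allP/(_ z).
by rewrite mem_rcons inE zs orbT => /(_ isT) yz; lia.
Qed.

Lemma path_descents w : path leq 0 (rcons (descents w) (size w)).
Proof.
rewrite rcons_path; apply/andP; split.
  have : sorted leq (descents w) by apply/sorted_filter/iota_sorted/leq_trans.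
  by case: (descents w).
have := mem_last 0 (descents w); rewrite inE => /orP[/eqP->//|].
by rewrite mem_filter mem_iota add1n ltnS => /and3P[_ _ /leq_trans]; apply; exact: leq_pred.
Qed.

Lemma sumn_compC w : sumn (compC w) = size w.
Proof. by rewrite /compC -/(gaps _ _) sumn_gaps ?path_descents // last_rcons subn0. Qed.

Lemma setS_compC w : setS (compC w) = descents w.
Proof.
rewrite /compC -/(gaps _ _) setS_gaps ?path_descents //.
by rewrite -[RHS]map_id; apply: eq_map => z; rewrite subn0.
Qed.

Lemma mem_descents w j :
  (j \in descents w) = [&& 0 < j, j < size w & nth 0 w j.-1 > nth 0 w j].
Proof.
rewrite mem_filter mem_iota; case: j => [|j] /=; first by rewrite andbF.
by apply/idP/idP => /andP[]; lia.
Qed.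

Definition lexle (a b : nat * nat) : bool :=
  (a.1 < b.1) || ((a.1 == b.1) && (a.2 <= b.2)).

Lemma lexle_trans : transitive lexle.
Proof. by move=> [a1 a2] [b1 b2] [c1 c2]; rewrite /lexle /=; lia. Qed.

Lemma lexle_total : total lexle.
Proof. by move=> [a1 a2] [b1 b2]; rewrite /lexle /=; lia. Qed.

Lemma lexle_anti : antisymmetric lexle.
Proof.
by move=> [a1 a2] [b1 b2]; rewrite /lexle /= => ?; apply/eqP; rewrite xpair_eqE; lia.
Qed.

Lemma lexle_label u v l : lexle (u, l) (v, l) = (u <= v).
Proof. by rewrite /lexle /=; lia. Qed.

Definition block_entries (b : nat * seq nat) : seq (nat * nat) :=
  [seq (v, b.1) | v <- b.2].

Definition unblock (bs : seq (nat * seq nat)) : seq (nat * nat) :=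
  flatten (map block_entries bs).

Definition maximal_runs (bs : seq (nat * seq nat)) : bool :=
  all (fun b => b.2 != [::]) bs && sorted (fun b c => b.1 != c.1) bs.

Fixpoint runs (s : seq (nat * nat)) : seq (nat * seq nat) :=
  if s is (v, l) :: s' then
    if runs s' is (l', b) :: bs then
      if l == l' then (l, v :: b) :: bs else (l, [:: v]) :: (l', b) :: bs
    else [:: (l, [:: v])]
  else [::].

Lemma unblock_runs s : unblock (runs s) = s.
Proof.
elim: s => [//|[v l] s]; rewrite /unblock /=.
by case: (runs s) => [<-//|[l' b] bs]; case: eqP => [<-|_] <-.
Qed.

Lemma maximal_runs_runs s : maximal_runs (runs s).
Proof.
elim: s => [//|[v l] s]; rewrite /=.
case: (runs s) => [//|[l' b] bs]; case: eqVneq => [<-|ne]; rewrite /maximal_runs /=.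
  by case/andP=> /andP[_ ->]; case: bs.
by case/andP=> -> ->; rewrite ne.
Qed.

Lemma runs_unblock bs : maximal_runs bs -> runs (unblock bs) = bs.
Proof.
elim: bs => [//|[l b] bs IH] /andP[/= /andP[b_ne bs_ne] adj].
have {}IH : runs (unblock bs) = bs by apply: IH; rewrite /maximal_runs bs_ne (path_sorted adj).
elim: b b_ne adj => [//|v [|v' b] IHb] _ adj.
  rewrite /unblock /= -/(unblock bs) IH.
  by case: bs adj {IH IHb bs_ne} => [//|[l' b'] bs] /= /andP[/negbTE ->].
have -> : unblock ((l, [:: v, v' & b]) :: bs) = (v, l) :: unblock ((l, v' :: b) :: bs) by [].
by cbn [runs]; rewrite IHb ?eqxx //; case: bs adj {IH IHb bs_ne}.
Qed.

Lemma unblock_inj : {in maximal_runs &, injective unblock}.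
Proof. by move=> bs bs' rbs rbs' E; rewrite -(runs_unblock rbs) E runs_unblock. Qed.

Lemma mem_unblock y bs :
  y \in unblock bs -> exists2 b, b \in bs & b.1 = y.2 /\ y.1 \in b.2.
Proof. by case/flattenP=> _ /mapP[b bbs ->] /mapP[v vb ->]; exists b. Qed.

Lemma unblock_mem (b : nat * seq nat) bs v : b \in bs -> v \in b.2 -> (v, b.1) \in unblock bs.
Proof. by move=> bbs vb; apply/flattenP; exists (block_entries b); apply: map_f. Qed.

Lemma map_fst_unblock bs : map fst (unblock bs) = flatten (map snd bs).
Proof.
elim: bs => [//|b bs IH]; rewrite /unblock /= map_cat -/(unblock _) IH.
by rewrite -map_comp map_id.
Qed.

Lemma sorted_unblock_nth (r : rel (nat * nat)) bs i j u v :
  transitive r -> sorted r (unblock bs) -> i < j -> j < size bs ->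
  u \in (nth (0, [::]) bs i).2 -> v \in (nth (0, [::]) bs j).2 ->
  r (u, (nth (0, [::]) bs i).1) (v, (nth (0, [::]) bs j).1).
Proof.
move=> r_trans so ij js ui vj.
apply: (sorted_flatten_nth_rel r_trans so ij); rewrite ?size_map //.
  by rewrite (nth_map (0, [::])) ?(ltn_trans ij) //; apply: map_f.
by rewrite (nth_map (0, [::])) //; apply: map_f.
Qed.

Section PosetPartitions.
Variables (d : Order.disp_t) (P : finPOrderType d) (theta : P -> nat).
Hypothesis theta_inj : injective theta.

Lemma linmultiext_card N (e : {ffun P -> {set 'I_N}}) : linmultiext e -> #|P| <= N.
Proof.
case=> e_ne [_ [e_part _]].
have pick x : exists i, i \in e x by have /set0Pn := e_ne x.
pose f x := proj1_sig (constructive_indefinite_description _ (pick x)).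
have fP x : f x \in e x := proj2_sig (constructive_indefinite_description _ (pick x)).
have f_inj : injective f.
  move=> x y fxy; have [z [_ z_uniq]] := e_part (f x).
  by rewrite -(z_uniq x (fP x)) (z_uniq y) // fxy fP.
by have := leq_card f f_inj; rewrite card_ord.
Qed.

(* At a cover s < t the choice between <= and < dictated by theta is exactly
   the lexicographic comparison of (value, theta); transitivity of lexle
   propagates it to every s < t. *)
Lemma PTpartition_lexle sigma : PTpartition theta sigma ->
  forall x y : P, (x < y)%O -> forall a b, a \in sigma x -> b \in sigma y ->
  lexle (a, theta x) (b, theta y).
Proof.
case=> sigma_ne [cover_le cover_lt].
have sorted_sigma p : sorted leq (sigma p) by case/andP: (sigma_ne p) => /andP[].
pose between x y := [set u : P | (x < u)%O && (u < y)%O].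
suff IH n x y : #|between x y| <= n -> (x < y)%O -> forall a b,
    a \in sigma x -> b \in sigma y -> lexle (a, theta x) (b, theta y).
  by move=> x y; apply: IH (leqnn _).
elim: n x y => [|n IH] x y.
  rewrite leqn0 => /eqP/cards0_eq between0 xy a b ax bY.
  have cxy : covers x y.
    rewrite /covers xy; apply/existsPn => u; apply/negP => xuy.
    by have := in_set0 u; rewrite -between0 inE xuy.
  have := sorted_leq_last (sorted_sigma x) ax.
  have := sorted_head_leq (sorted_sigma y) bY.
  have [lt|gt|eq] := ltngtP (theta x) (theta y).
  - by have := cover_le x y cxy lt; rewrite /lexle /= /mmax /mmin; lia.
  - by have := cover_lt x y cxy gt; rewrite /lexle /= /mmax /mmin; lia.
  - by move: xy; rewrite (theta_inj eq) ltxx.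
move=> le_n xy.
have [between0|[u]] := set_0Vmem (between x y).
  by apply: IH => //; rewrite between0 cards0.
rewrite inE => /andP[xu uy].
have sub1 : between x u \proper between x y.
  apply/properP; split; last by exists u; rewrite !inE ?xu ?uy // ltxx andbF.
  by apply/subsetP => v; rewrite !inE => /andP[-> vu]; apply: lt_trans vu uy.
have sub2 : between u y \proper between x y.
  apply/properP; split; last by exists u; rewrite !inE ?xu ?uy // ltxx.
  by apply/subsetP => v; rewrite !inE => /andP[uv ->]; rewrite andbT (lt_trans xu uv).
move=> a b ax bY; have /andP[_ u_ne] := sigma_ne u.
have c_u := mem_head_nonnil 0 u_ne.
apply: lexle_trans (IH x u (leq_trans (proper_card sub1) le_n) xu a _ ax c_u) _.
exact: IH u y (leq_trans (proper_card sub2) le_n) uy _ b c_u bY.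
Qed.

Lemma sorted_map_fst_label (s : seq (nat * nat)) l :
  sorted lexle s -> all (fun y => y.2 == l) s -> sorted leq (map fst s).
Proof.
move=> so s_l; rewrite sorted_map; apply: sub_in_sorted s_l so.
by move=> [a1 a2] [b1 b2]; rewrite !unfold_in /= => /eqP -> /eqP ->; rewrite lexle_label.
Qed.

Lemma sum_count_label (L : seq (nat * nat)) (a : pred (nat * nat)) :
  (forall y, y \in L -> exists p, y.2 = theta p) ->
  \sum_(p : P) count (fun y => a y && (y.2 == theta p)) L = count a L.
Proof.
elim: L => [|y L IH] L_lab /=; first by rewrite big1.
rewrite big_split /= IH => [|z zL]; last by apply: L_lab; rewrite inE zL orbT.
have [q ->] := L_lab y (mem_head _ _); congr (_ + _).
rewrite (bigD1 q) //= eqxx andbT big1 ?addn0 // => p pq.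
by rewrite (inj_eq theta_inj) eq_sym (negbTE pq) andbF.
Qed.

Definition partition_of_blocks (bs : seq (nat * seq nat)) : {ffun P -> seq nat} :=
  [ffun p => [seq y.1 | y <- unblock bs & y.2 == theta p]].

Lemma mem_partition_of_blocks bs p v :
  (v \in partition_of_blocks bs p) = ((v, theta p) \in unblock bs).
Proof.
rewrite ffunE; apply/mapP/idP => [[[v' l]]|vp].
  by rewrite mem_filter => /andP[/eqP /= -> +] ->.
by exists (v, theta p); rewrite ?mem_filter ?eqxx.
Qed.

Definition partition_of (t : nat * seq nat * seq (seq nat)) : {ffun P -> seq nat} :=
  partition_of_blocks (zip t.1.2 t.2).

Section Triple.
Variables (m : nat -> nat) (N : nat) (w : seq nat) (tau : seq (seq nat)).
Hypothesis tR : Rcoeffset theta m (N, w, tau).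

Lemma size_word : size w = N.
Proof. by case: tR => _ [[]]. Qed.

Lemma size_tau : size tau = N.
Proof. by case: tR => _ [_ [->]]; rewrite sumn_compC size_word. Qed.

Lemma size_zip_word : size (zip w tau) = N.
Proof. by rewrite size_zip size_word size_tau minnn. Qed.

Lemma nth_zip_word i : nth (0, [::]) (zip w tau) i = (nth 0 w i, nth [::] tau i).
Proof. by rewrite nth_zip // size_word size_tau. Qed.

Lemma nemset_tau s : s \in tau -> nemset s.
Proof. by case: tR => _ [_ [_ [tau_ne _]]]; apply: tau_ne. Qed.

Lemma nemset_zip b : b \in zip w tau -> nemset b.2.
Proof.
move=> bz; apply: nemset_tau; have := map_f snd bz.
by rewrite -/(unzip2 _) unzip2_zip // size_word size_tau.
Qed.

Lemma word_label i : i < N -> exists x, nth 0 w i = theta x.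
Proof.
case: tR => _ [[_ [e [[_ [_ [e_part _]]] e_word]]] _] iN.
by have [x [ix _]] := e_part (Ordinal iN); exists x; apply: e_word ix.
Qed.

Lemma word_hit x : exists2 i, i < N & nth 0 w i = theta x.
Proof.
case: tR => _ [[_ [e [[e_ne _] e_word]]] _].
by have /set0Pn[i ix] := e_ne x; exists (val i); [exact: ltn_ord | exact: e_word ix].
Qed.

Lemma word_lt x y i j : (x < y)%O -> i < N -> j < N ->
  nth 0 w i = theta x -> nth 0 w j = theta y -> i < j.
Proof.
case: tR => _ [[_ [e [[_ [e_lt [e_part _]]] e_word]]] _] xy iN jN wi wj.
have [x' [ix _]] := e_part (Ordinal iN); have [y' [jy _]] := e_part (Ordinal jN).
move: (e_word _ _ ix) (e_word _ _ jy); rewrite /= wi wj => /theta_inj ex /theta_inj ey.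
by subst x' y'; apply: e_lt xy _ _ ix jy.
Qed.

Lemma word_adjacent i : i.+1 < N -> nth 0 w i != nth 0 w i.+1.
Proof.
case: tR => _ [[_ [e [[_ [_ [e_part e_sep]]] e_word]]] _] iN.
have [x [ix _]] := e_part (Ordinal (ltnW iN)); have [y [iy _]] := e_part (Ordinal iN).
rewrite (e_word _ _ ix) (e_word _ _ iy) (inj_eq theta_inj); apply/eqP => exy.
by subst y; have := e_sep x (Ordinal (ltnW iN)) (Ordinal iN) erefl; rewrite ix iy.
Qed.

Lemma maximal_runs_zip : maximal_runs (zip w tau).
Proof.
apply/andP; split; first by apply/allP => b /nemset_zip /andP[].
apply/(sortedP (0, [::])) => i; rewrite size_zip_word => iN.
by rewrite !nth_zip_word; apply: word_adjacent.
Qed.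

(* Between consecutive runs the inequality of \hat L_{C(w)} is strict exactly
   at the descents of w, i.e. exactly when the label decreases. *)
Lemma sorted_unblock_zip : sorted lexle (unblock (zip w tau)).
Proof.
case: tR => _ [_ [_ [_ [chain_le [chain_lt _]]]]].
rewrite sumn_compC size_word setS_compC in chain_le chain_lt.
apply: (@sorted_flatten _ lexle (0, 0)).
- apply/allP => _ /mapP[b /nemset_zip /andP[_ b_ne] ->].
  by rewrite -size_eq0 size_map size_eq0.
- apply/allP => _ /mapP[b /nemset_zip /andP[/andP[sb _] _] ->].
  by rewrite sorted_map; apply: sub_sorted sb => u v; rewrite /= lexle_label.
move=> j; rewrite size_map size_zip_word => jN.
rewrite !(nth_map (0, [::])) ?size_zip_word 1?(ltnW jN) // !nth_zip_word /block_entries /=.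
have tau_ne k : k < N -> nth [::] tau k != [::].
  move=> kN; have kt : k < size tau by rewrite size_tau.
  by case/andP: (nemset_tau (mem_nth [::] kt)).
have le_j := chain_le j.+1 isT jN; have lt_j := chain_lt j.+1 isT jN.
rewrite mem_descents /= size_word jN in lt_j.
move: le_j lt_j; rewrite /mmax /mmin /=.
case: (nth [::] tau j) (tau_ne j (ltnW jN)) => // a s _.
case: (nth [::] tau j.+1) (tau_ne j.+1 jN) => // b s' _ /=.
by rewrite last_map /lexle /=; lia.
Qed.

Lemma mem_unblock_zip y : y \in unblock (zip w tau) ->
  exists2 i, i < N & nth 0 w i = y.2 /\ y.1 \in nth [::] tau i.
Proof.
case/mem_unblock=> -[l c] bz [/= <- yc]; exists (index (l, c) (zip w tau)).
  by rewrite -size_zip_word index_mem.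
by have := nth_index (0, [::]) bz; rewrite nth_zip_word => -[-> ->].
Qed.

Lemma label_unblock_zip y : y \in unblock (zip w tau) -> exists p, y.2 = theta p.
Proof.
by case/mem_unblock_zip=> i iN [<- _]; have [p wp] := word_label iN; exists p.
Qed.

Lemma unblock_zip_gt0 y : y \in unblock (zip w tau) -> 0 < y.1.
Proof. by case/mem_unblock=> b /nemset_zip /andP[/andP[_ /allP pos] _] [_ /pos]. Qed.

Lemma mem_partition_of a x : a \in partition_of (N, w, tau) x ->
  exists2 i, i < N & nth 0 w i = theta x /\ a \in nth [::] tau i.
Proof. by rewrite mem_partition_of_blocks => /mem_unblock_zip. Qed.

Lemma partition_of_lexle x y a b : (x < y)%O ->
  a \in partition_of (N, w, tau) x -> b \in partition_of (N, w, tau) y ->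
  lexle (a, theta x) (b, theta y).
Proof.
move=> xy /mem_partition_of[i iN [wi ai]] /mem_partition_of[j jN [wj bj]].
have ij := word_lt xy iN jN wi wj.
have := @sorted_unblock_nth lexle (zip w tau) i j a b lexle_trans sorted_unblock_zip ij.
by rewrite size_zip_word !nth_zip_word /= wi wj => ->.
Qed.

Lemma partition_of_nonnil x : partition_of (N, w, tau) x != [::].
Proof.
have [i iN wi] := word_hit x.
have bz : nth (0, [::]) (zip w tau) i \in zip w tau by rewrite mem_nth ?size_zip_word.
have /andP[_ b_ne] := nemset_zip bz.
have := unblock_mem bz (mem_head_nonnil 0 b_ne).
rewrite [in X in (_, X)]nth_zip_word /= wi -(mem_partition_of_blocks (zip w tau) x) => vx.
by apply/eqP => E; rewrite /partition_of /= E in vx.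
Qed.

Lemma partition_of_Kcoeff : Kcoeffset theta m (partition_of (N, w, tau)).
Proof.
have ends x : mmax (partition_of (N, w, tau) x) \in partition_of (N, w, tau) x /\
              mmin (partition_of (N, w, tau) x) \in partition_of (N, w, tau) x.
  by split; [apply: mem_last_nonnil | apply: mem_head_nonnil]; apply: partition_of_nonnil.
split; [split; [|split]|].
- move=> x; rewrite /nemset partition_of_nonnil andbT /posmset ffunE.
  apply/andP; split; last first.
    by apply/allP => v /mapP[y]; rewrite mem_filter => /andP[_ /unblock_zip_gt0 + ->].
  apply: (sorted_map_fst_label (l := theta x)); last exact: filter_all.
  exact: (sorted_filter lexle_trans _ sorted_unblock_zip).
- move=> s t /andP[st _] lt_st.
  by have := partition_of_lexle st (ends s).1 (ends t).2; rewrite /lexle /=; lia.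
- move=> s t /andP[st _] gt_st.
  by have := partition_of_lexle st (ends s).1 (ends t).2; rewrite /lexle /=; lia.
move=> r r_gt0; case: tR => _ [_ [_ [_ [_ [_ <-]]]]] //.
under eq_bigr => p _ do rewrite ffunE count_map count_filter.
rewrite (sum_count_label (fun y => y.1 == r)); last exact: label_unblock_zip.
rewrite -count_flatten -[tau in RHS](@unzip2_zip _ _ w) ?size_word ?size_tau //.
by rewrite -map_fst_unblock count_map.
Qed.
Lemma filter_unblock_zip_unlabelled l : (forall p, theta p != l) ->
  [seq y <- unblock (zip w tau) | y.2 == l] = [::].
Proof.
move=> no_l; rewrite (@eq_in_filter _ _ pred0) ?filter_pred0 //.
by move=> y /label_unblock_zip[p ->]; apply/negbTE/no_l.
Qed.

End Triple.

Lemma count_mem_label (L : seq (nat * nat)) v l :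
  count_mem (v, l) L = count_mem v [seq y.1 | y <- L & y.2 == l].
Proof.
rewrite count_map count_filter; apply: eq_count => -[a b] /=.
by rewrite xpair_eqE andbC.
Qed.

Lemma partition_of_inj m t t' : Rcoeffset theta m t -> Rcoeffset theta m t' ->
  partition_of t = partition_of t' -> t = t'.
Proof.
case: t t' => [[N w] tau] [[N' w'] tau'] tR tR' E.
have E_unblock : unblock (zip w tau) = unblock (zip w' tau').
  apply: (sorted_eq lexle_trans lexle_anti (sorted_unblock_zip tR) (sorted_unblock_zip tR')).
  apply/allP => -[v l] _; apply/eqP; rewrite !count_mem_label.
  case: (pickP (fun p => theta p == l)) => [p /eqP <-|no_p].
    by move/ffunP: E => /(_ p); rewrite !ffunE => ->.
  have no_l p : theta p != l by rewrite no_p.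
  by rewrite (filter_unblock_zip_unlabelled tR) ?(filter_unblock_zip_unlabelled tR').
have E_zip := unblock_inj (maximal_runs_zip tR) (maximal_runs_zip tR') E_unblock.
have [sw st] := (size_word tR, size_tau tR); have [sw' st'] := (size_word tR', size_tau tR').
move: (congr1 unzip1 E_zip) (congr1 unzip2 E_zip).
rewrite !unzip1_zip ?unzip2_zip ?sw ?st ?sw' ?st' // => ew et.
by subst w' tau'; rewrite -sw -sw'.
Qed.

Definition entries (sigma : {ffun P -> seq nat}) : seq (nat * nat) :=
  flatten [seq [seq (v, theta p) | v <- sigma p] | p <- enum P].

Lemma mem_entries sigma y :
  y \in entries sigma <-> exists p, y.2 = theta p /\ y.1 \in sigma p.
Proof.
split; first by case/flattenP => _ /mapP[p _ ->] /mapP[v vp ->]; exists p.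
case: y => v l [p [/= -> vp]]; apply/flattenP; exists [seq (v, theta p) | v <- sigma p].
  by apply: map_f; rewrite mem_enum.
exact: (map_f (fun v => (v, theta p)) vp).
Qed.

Lemma filter_entries sigma p :
  [seq y <- entries sigma | y.2 == theta p] = [seq (v, theta p) | v <- sigma p].
Proof.
rewrite /entries filter_flatten -map_comp.
rewrite /flatten foldrE big_map enumT.
rewrite (eq_bigr (fun q => if q == p then [seq (v, theta p) | v <- sigma p] else [::])).
  by rewrite -big_mkcond big_pred1_eq.
move=> q _ /=; have [->|qp] := eqVneq q p.
  by apply/all_filterP/allP => _ /mapP[v _ ->] /=.
apply/eqP; rewrite -[_ == _]negbK -has_filter; apply/hasPn => _ /mapP[v _ ->] /=.
by rewrite (inj_eq theta_inj).
Qed.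

Lemma count_entries sigma r :
  count (fun y => y.1 == r) (entries sigma) = \sum_p count_mem r (sigma p).
Proof.
rewrite /entries count_flatten -map_comp sumnE big_map big_enum /=.
by apply: eq_bigr => p _; rewrite count_map.
Qed.

Definition entry_runs (sigma : {ffun P -> seq nat}) : seq (nat * seq nat) :=
  runs (sort lexle (entries sigma)).

Definition triple_of (sigma : {ffun P -> seq nat}) : nat * seq nat * seq (seq nat) :=
  (size (entry_runs sigma), unzip1 (entry_runs sigma), unzip2 (entry_runs sigma)).

Definition runs_extension (bs : seq (nat * seq nat)) : {ffun P -> {set 'I_(size bs)}} :=
  [ffun x => [set i : 'I_(size bs) | (nth (0, [::]) bs i).1 == theta x]].

Section Surjection.
Variables (m : nat -> nat) (sigma : {ffun P -> seq nat}).
Hypothesis sigmaK : Kcoeffset theta m sigma.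

Local Notation bs := (entry_runs sigma).
Local Notation N := (size (entry_runs sigma)).
Local Notation label i := (nth (0, [::]) (entry_runs sigma) i).1.
Local Notation block i := (nth (0, [::]) (entry_runs sigma) i).2.

Lemma sigma_nemset p : nemset (sigma p).
Proof. by case: sigmaK => -[]. Qed.

Lemma sorted_unblock_entry_runs : sorted lexle (unblock bs).
Proof. by rewrite unblock_runs; apply/sort_sorted/lexle_total. Qed.

Lemma mem_unblock_entry_runs y : (y \in unblock bs) = (y \in entries sigma).
Proof. by rewrite unblock_runs mem_sort. Qed.

Lemma maximal_entry_runs : maximal_runs bs.
Proof. exact: maximal_runs_runs. Qed.

Lemma entry_runs_nonnil i : i < N -> block i != [::].
Proof. by move=> iN; case/andP: maximal_entry_runs => /allP -> //; rewrite mem_nth. Qed.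

Lemma entry_runs_label i v : i < N -> v \in block i ->
  exists q, label i = theta q /\ v \in sigma q.
Proof.
move=> iN vi; have := unblock_mem (mem_nth (0, [::]) iN) vi.
by rewrite mem_unblock_entry_runs => /mem_entries.
Qed.

Lemma entry_runs_lt x y i j : (x < y)%O -> i < N -> j < N ->
  label i = theta x -> label j = theta y -> i < j.
Proof.
move=> xy iN jN ix jy; have x_neq_y : theta x != theta y.
  by rewrite (inj_eq theta_inj); apply: contraTneq xy => ->; rewrite ltxx.
have ai := mem_head_nonnil 0 (entry_runs_nonnil iN).
have bj := mem_head_nonnil 0 (entry_runs_nonnil jN).
have [x' [ix' ax]] := entry_runs_label iN ai; have [y' [jy' bY]] := entry_runs_label jN bj.
move: ix' jy'; rewrite ix jy => /theta_inj ex /theta_inj ey; subst x' y'.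
have [//|ji|eij] := ltngtP i j; last by move: x_neq_y; rewrite -ix -jy eij eqxx.
have := sorted_unblock_nth lexle_trans sorted_unblock_entry_runs ji iN bj ai.
rewrite ix jy => yx; have := PTpartition_lexle (proj1 sigmaK) xy ax bY.
by move=> /(conj yx)/andP/lexle_anti[_ /eqP]; rewrite eq_sym (negbTE x_neq_y).
Qed.

Lemma linmultiext_entry_runs : linmultiext (runs_extension bs).
Proof.
have inE' (i : 'I_N) x : (i \in runs_extension bs x) = (label i == theta x).
  by rewrite ffunE inE.
split; [|split; [|split]].
- move=> x; apply/set0Pn.
  have : (head 0 (sigma x), theta x) \in unblock bs.
    rewrite mem_unblock_entry_runs; apply/mem_entries; exists x; split => //.
    by apply: mem_head_nonnil; case/andP: (sigma_nemset x).
  case/mem_unblock => b bbs [b1 _]; have iN : index b bs < N by rewrite index_mem.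
  by exists (Ordinal iN); rewrite inE' /= nth_index // b1.
- by move=> x y xy i j; rewrite !inE' => /eqP ix /eqP jy; apply: entry_runs_lt xy _ _ ix jy.
- move=> i; have iN := ltn_ord i.
  have [q [iq _]] := entry_runs_label iN (mem_head_nonnil 0 (entry_runs_nonnil iN)).
  by exists q; split=> [|q']; rewrite inE' iq // => /eqP/theta_inj.
move=> x i j ji; rewrite !inE'; apply/negP => /andP[/eqP ix /eqP jx].
case/andP: maximal_entry_runs => _ /(sortedP (0, [::])) /(_ i).
by rewrite -ji ltn_ord ix jx eqxx => /(_ isT).
Qed.

Lemma nemset_entry_runs b : b \in bs -> nemset b.2.
Proof.
move=> bbs; rewrite /nemset /posmset; apply/andP; split; last first.
  by case/andP: maximal_entry_runs => /allP/(_ _ bbs).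
apply/andP; split.
  have -> : b.2 = map fst (block_entries b) by rewrite -map_comp map_id.
  apply: (sorted_map_fst_label (l := b.1)); last by apply/allP => _ /mapP[v _ ->] /=.
  by apply: (sorted_flatten_mem sorted_unblock_entry_runs); apply: map_f.
apply/allP => v vb; have := unblock_mem bbs vb.
rewrite mem_unblock_entry_runs => /mem_entries[q [_ vq]].
by case/andP: (sigma_nemset q) => /andP[_ /allP/(_ _ vq)].
Qed.

Lemma lexle_entry_runs j : j.+1 < N ->
  lexle (mmax (block j), label j) (mmin (block j.+1), label j.+1).
Proof.
move=> jN; have := sorted_unblock_nth lexle_trans sorted_unblock_entry_runs (ltnSn j) jN.
by apply; [apply: mem_last_nonnil | apply: mem_head_nonnil];
  apply: entry_runs_nonnil => //; apply: ltnW.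
Qed.

Lemma triple_of_Rcoeff : Rcoeffset theta m (triple_of sigma).
Proof.
have sw : size (unzip1 bs) = N by rewrite size_map.
have st : size (unzip2 bs) = N by rewrite size_map.
split; first exact: linmultiext_card linmultiext_entry_runs.
split.
  split=> //; exists (runs_extension bs); split; first exact: linmultiext_entry_runs.
  by move=> i x; rewrite ffunE inE (nth_unzip1 _ [::]) => /eqP.
split; first by rewrite sumn_compC sw st.
split; first by move=> _ /mapP[b /nemset_entry_runs ? ->].
rewrite sumn_compC sw setS_compC.
have lexle_j j : 0 < j -> j < N -> lexle
    (mmax (nth [::] (unzip2 bs) j.-1), nth 0 (unzip1 bs) j.-1)
    (mmin (nth [::] (unzip2 bs) j), nth 0 (unzip1 bs) j).
  by case: j => // j _ jN; rewrite !(nth_unzip1 _ [::]) !(nth_unzip2 0) lexle_entry_runs.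
split; first by move=> j j_gt0 jN; have := lexle_j j j_gt0 jN; rewrite /lexle /=; lia.
split.
  move=> j j_gt0 jN; rewrite mem_descents sw j_gt0 jN /=.
  by have := lexle_j j j_gt0 jN; rewrite /lexle /=; lia.
move=> r r_gt0; case: sigmaK => _ <- //; rewrite -count_entries.
rewrite -(permP (permEl (perm_sort lexle (entries sigma)))).
rewrite -(unblock_runs (sort lexle (entries sigma))) -/(entry_runs sigma).
by rewrite -count_flatten -map_fst_unblock count_map.
Qed.

Lemma partition_of_triple_of : partition_of (triple_of sigma) = sigma.
Proof.
apply/ffunP => p; rewrite ffunE /= zip_unzip unblock_runs.
rewrite (filter_sort lexle_total lexle_trans) filter_entries (sorted_sort lexle_trans).
  by rewrite -map_comp map_id.
have /andP[/andP[sorted_p _] _] := sigma_nemset p.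
by rewrite sorted_map; apply: sub_sorted sorted_p => u v; rewrite /= lexle_label.
Qed.

End Surjection.
End PosetPartitions.

Fixpoint seqs_upto (n : nat) (V : seq nat) : seq (seq nat) :=
  if n is n'.+1 then [::] :: [seq v :: s | v <- V, s <- seqs_upto n' V] else [:: [::]].

Lemma mem_seqs_upto n V s : size s <= n -> all (mem V) s -> s \in seqs_upto n V.
Proof.
elim: n s => [|n IH] [|x s] //= s_n /andP[xV sV].
by rewrite inE; apply/orP; right; apply/allpairsPdep; exists x, s; rewrite IH.
Qed.

Lemma size_count_mem (V s : seq nat) : uniq V -> all (mem V) s ->
  size s = \sum_(v <- V) count_mem v s.
Proof.
move=> uV; elim: s => [|x s IH] /=; first by rewrite big1.
case/andP=> xV sV; rewrite big_split /= -IH //.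
have -> : \sum_(v <- V) (x == v) = count_mem x V.
  by rewrite -sumn_count sumnE big_map; apply: eq_bigr => v _; rewrite /= eq_sym.
by rewrite count_uniq_mem // xV.
Qed.

Lemma Kcoeffset_finite (d : Order.disp_t) (P : finPOrderType d) (theta : P -> nat) m k :
  (forall r, k < r -> m r = 0) -> exists c, card_eq (Kcoeffset theta m) c.
Proof.
move=> m_k; pose V := iota 0 k.+1; pose D := \sum_(v <- V) m v.
pose L := seqs_upto D V.
pose at_L (g : {ffun P -> 'I_(size L)}) : {ffun P -> seq nat} := [ffun p => nth [::] L (g p)].
apply: (card_eq_cover (s := map at_L (enum {ffun P -> 'I_(size L)}))).
move=> sigma [[sigma_ne _] sigma_m].
have sigma_L p : sigma p \in L.
  have /andP[/andP[_ pos] _] := sigma_ne p.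
  have count_le v : 0 < v -> count_mem v (sigma p) <= m v.
    by move=> v_gt0; rewrite -(sigma_m v v_gt0) (bigD1 p) //= leq_addr.
  have sV : all (mem V) (sigma p).
    apply/allP => v vs; rewrite /= mem_iota add0n ltnS /=; case: leqP => // kv.
    have := count_le v (allP pos v vs); rewrite (m_k v kv) leqn0.
    by move=> /eqP/count_memPn/negP.
  apply: (mem_seqs_upto _ sV); rewrite (size_count_mem (iota_uniq 0 k.+1) sV).
  apply: leq_sum => -[|v] _; last exact: count_le.
  by rewrite (count_memPn _) //; apply/negP => /(allP pos).
have iL p : index (sigma p) L < size L by rewrite index_mem.
have -> : sigma = at_L [ffun p => Ordinal (iL p)].
  by apply/ffunP => p; rewrite !ffunE /= nth_index.
by apply: map_f; rewrite mem_enum.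
Qed.

Theorem mainTheorem4 (d : Order.disp_t) (P : finPOrderType d)
    (theta : P -> nat)
    (theta_inj : injective theta)
    (theta_range : forall p : P, (1 <= theta p <= #|P|)%N) :
  forall m : nat -> nat, (exists k, forall r, (k < r)%N -> m r = 0%N) ->
  exists c : nat, card_eq (Kcoeffset theta m) c /\ card_eq (Rcoeffset theta m) c.
Proof.
move=> m [k m_k]; have [c Kc] := Kcoeffset_finite theta m_k.
exists c; split=> //; apply: (card_eq_bij (F := partition_of theta) Kc).
- by move=> [[N w] tau]; apply: partition_of_Kcoeff.
- exact: partition_of_inj.
- move=> sigma sigmaK; exists (triple_of theta sigma).
  by split; [apply: triple_of_Rcoeff | apply: partition_of_triple_of sigmaK].
Qed.
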